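(* Let $A\in\mathbb{R}^{n\times n}$ and $H\in\mathbb{R}^{n\times n}$ be symmetric positive definite, let $Z\in\mathbb{R}^{n\times r}$ with $r<n$ have full column rank, let $P=I-AZ(Z^TAZ)^{-1}Z^T$, let $\bm b\in\mathbb{R}^n$ with $P\bm b\neq \bm 0$, and let $\bm x = A^{-1}\bm b$. For arbitrary vectors $\tilde{\bm x}_j\in\mathbb{R}^n$ define $$\bm{x}_j = P^T\tilde{\bm{x}}_j + Z(Z^TAZ)^{-1}Z^T\bm{b},\qquad \bm r_j = \bm b - A\bm x_j.$$ Then $$\frac{\|\bm{x}-\bm{x}_j\|_{PA}}{\|\bm{x}\|_{PA}} \le \sqrt{\kappa_{\mathrm{eff}}(H^{-1}PA)}\,\frac{\|\bm{r}_j\|_{H^{-1}}}{\|P\bm{b}\|_{H^{-1}}}.$$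
   Context: $PA$ is symmetric positive semidefinite with kernel equal to the range of $Z$ (dimension $r$). For a symmetric positive semidefinite matrix $B$, $\|\bm v\|_B=\sqrt{\bm v^TB\bm v}$. The matrix $H^{-1}PA$ is similar to the symmetric positive semidefinite matrix $L^{-1}PAL^{-T}$, where $H=LL^T$ is the Cholesky factorization, so its eigenvalues are real and nonnegative; ordering them $\lambda_1\le\dots\le\lambda_n$, exactly $r$ are zero, and $\kappa_{\mathrm{eff}}(H^{-1}PA)=\lambda_n(H^{-1}PA)/\lambda_{r+1}(H^{-1}PA)$. *)

From HB Require Import structures.
From mathcomp Require Import all_boot all_order all_algebra.
From mathcomp Require Import reals.
Set Implicit Arguments. Unset Strict Implicit. Unset Printing Implicit Defensive.
Import Order.TTheory GRing.Theory Num.Theory.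
Local Open Scope ring_scope.

Definition spd (R : realType) (n : nat) (M : 'M[R]_n) : Prop :=
  M^T = M /\ forall v : 'cV[R]_n, v != 0 -> 0 < (v^T *m M *m v) 0 0.

Definition mxnorm (R : realType) (n : nat) (B : 'M[R]_n) (v : 'cV[R]_n) : R :=
  Num.sqrt ((v^T *m B *m v) 0 0).

Definition ordered_eigenvalues (R : realType) (n : nat) (M : 'M[R]_n)
  (s : seq R) : Prop :=
  [/\ size s = n, sorted <=%R s & char_poly M = \prod_(x <- s) ('X - x%:P)].

(* kappa_eff = lambda_n / lambda_{r+1}  (0-based indices n-1 and r) *)
Definition kappa_eff (R : realType) (n r : nat) (s : seq R) : R :=
  s`_(n.-1) / s`_r.

Definition deflP (R : realType) (n r : nat) (A : 'M[R]_n) (Z : 'M[R]_(n, r))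
  : 'M[R]_n := 1%:M - A *m Z *m invmx (Z^T *m A *m Z) *m Z^T.

From HB Require Import structures.
From mathcomp Require Import all_boot all_order all_algebra.
From mathcomp Require Import reals.
From mathcomp Require Import ring lra.
Set Implicit Arguments. Unset Strict Implicit. Unset Printing Implicit Defensive.
Import Order.TTheory GRing.Theory Num.Theory.
Local Open Scope ring_scope.

(* Write B := P A, e := x - x_j and M := H^-1 B.  Then B is symmetric positive
   semidefinite of rank n - r, P b = B x and r_j = B e.  M is self-adjoint for
   the inner product given by H, so (M - c)^2 v = 0 forces (M - c) v = 0; hence
   M is diagonalizable, with nonnegative eigenvalues, r of which vanish.  Every
   eigenvalue thus lies in {0} U [l_(r+1), l_n], where p(l) = l (l - l_(r+1))
   and q(l) = l (l_n - l) are nonnegative.  Hence H p(M) and H q(M) are positive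
   semidefinite, that is
     l_(r+1) ||e||_B^2 <= ||B e||_(H^-1)^2,   ||B x||_(H^-1)^2 <= l_n ||x||_B^2,
   and the quotient of these two inequalities is the claim. *)

Definition qform (R : realType) n (M : 'M[R]_n) (v : 'cV[R]_n) : R :=
  (v^T *m M *m v) 0 0.

Definition psd (R : realType) n (M : 'M[R]_n) : Prop :=
  forall v, 0 <= qform M v.

Section QuadraticForms.
Variables (R : realType) (n : nat).
Implicit Types (M N : 'M[R]_n) (v : 'cV[R]_n).

Lemma qform_mulmx m (M : 'M[R]_m) (N : 'M[R]_(m, n)) v :
  qform M (N *m v) = qform (N^T *m M *m N) v.
Proof. by rewrite /qform trmx_mul !mulmxA. Qed.

Lemma qformD M N v : qform (M + N) v = qform M v + qform N v.
Proof. by rewrite /qform mulmxDr mulmxDl mxE. Qed.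

Lemma qformZ a M v : qform (a *: M) v = a * qform M v.
Proof. by rewrite /qform -scalemxAr -scalemxAl mxE. Qed.

Lemma qform_delta M i : qform M (delta_mx i 0) = M i i.
Proof. by rewrite /qform trmx_delta -rowE -colE !mxE. Qed.

Lemma spd_psd M : spd M -> psd M.
Proof.
case=> _ posM v; have [->|v_neq0] := eqVneq v 0; last exact/ltW/posM.
by rewrite /qform mulmx0 mxE.
Qed.

Lemma spd_diag_gt0 M i : spd M -> 0 < M i i.
Proof.
case=> _ posM; rewrite -(qform_delta M i); apply: posM.
by apply/eqP => /matrixP /(_ i 0); rewrite !mxE !eqxx => /eqP; rewrite oner_eq0.
Qed.

Lemma spd_qform_eq0 M v : spd M -> qform M v = 0 -> v = 0.
Proof.
case=> _ posM Mv0; apply/eqP; apply: contraT => v_neq0.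
by have := posM v v_neq0; rewrite -/(qform M v) Mv0 ltxx.
Qed.

Lemma spd_unitmx M : spd M -> M \in unitmx.
Proof.
move=> spdM; rewrite -row_free_unit -kermx_eq0; apply/eqP/row_matrixP => i.
have uM0 : row i (kermx M) *m M = 0 by rewrite -row_mul mulmx_ker row0.
have : (row i (kermx M))^T = 0.
  by apply: (spd_qform_eq0 spdM); rewrite /qform trmxK uM0 mul0mx mxE.
by move/(congr1 trmx); rewrite trmxK trmx0 row0.
Qed.

Lemma spd_congr m (A : 'M[R]_m) (Z : 'M[R]_(m, n)) :
  spd A -> \rank Z = n -> spd (Z^T *m A *m Z).
Proof.
move=> [symA posA] rankZ; split; first by rewrite !trmx_mul trmxK symA mulmxA.
move=> v v_neq0; rewrite -/(qform _ v) -qform_mulmx; apply: posA.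
have freeZt : row_free Z^T by rewrite /row_free mxrank_tr rankZ.
by rewrite -trmx_eq0 trmx_mul (mulmx_free_eq0 _ freeZt) trmx_eq0.
Qed.

Lemma spd_invmx M : spd M -> spd (invmx M).
Proof.
move=> spdM; have unitM := spd_unitmx spdM.
have rank_invM : \rank (invmx M) = n by rewrite mxrank_unit ?unitmx_inv.
have := spd_congr spdM rank_invM.
by rewrite trmx_inv (proj1 spdM) mulVmx // mul1mx.
Qed.

End QuadraticForms.

Section Deflation.
Variables (R : realType) (n r : nat) (A : 'M[R]_n) (Z : 'M[R]_(n, r)).
Hypotheses (spdA : spd A) (rankZ : \rank Z = r).

Definition deflQ : 'M[R]_n := Z *m invmx (Z^T *m A *m Z) *m Z^T.

Local Notation P := (deflP A Z).
Local Notation Q := deflQ.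

Lemma deflPE : P = 1%:M - A *m Q.
Proof. by rewrite /deflP /deflQ !mulmxA. Qed.

Lemma deflPA_E : P *m A = A - A *m Q *m A.
Proof. by rewrite deflPE mulmxBl mul1mx. Qed.

Lemma deflQ_tr : Q^T = Q.
Proof.
by rewrite /deflQ !trmx_mul trmxK trmx_inv !trmx_mul trmxK (proj1 spdA) !mulmxA.
Qed.

Lemma trZ_mulA_deflQ : Z^T *m A *m Q = Z^T.
Proof.
have unitE := spd_unitmx (spd_congr spdA rankZ).
by rewrite /deflQ !mulmxA mulmxV // mul1mx.
Qed.

Lemma deflQ_mulA_deflQ : Q *m A *m Q = Q.
Proof.
have -> : Q *m A *m Q = Z *m invmx (Z^T *m A *m Z) *m (Z^T *m A *m Q).
  by rewrite /deflQ !mulmxA.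
by rewrite trZ_mulA_deflQ.
Qed.

Lemma deflP_idem : P *m P = P.
Proof.
have AQ_idem : A *m Q *m (A *m Q) = A *m Q.
  by rewrite mulmxA -(mulmxA A Q A) -mulmxA deflQ_mulA_deflQ.
by rewrite deflPE mulmxBl mul1mx mulmxBr mulmx1 AQ_idem subrr subr0.
Qed.

Lemma mulA_trdeflP : A *m P^T = P *m A.
Proof.
rewrite deflPA_E deflPE linearB /= trmx1 trmx_mul deflQ_tr (proj1 spdA).
by rewrite mulmxBr mulmx1 mulmxA.
Qed.

Lemma deflPA_tr : (P *m A)^T = P *m A.
Proof. by rewrite trmx_mul (proj1 spdA) mulA_trdeflP. Qed.

Lemma deflPA_deflQ : P *m A *m Q = 0.
Proof.
by rewrite deflPA_E mulmxBl -(mulmxA A Q A) -mulmxA deflQ_mulA_deflQ subrr.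
Qed.

Lemma deflPA_mul_trdeflP : P *m A *m P^T = P *m A.
Proof. by rewrite -mulmxA mulA_trdeflP mulmxA deflP_idem. Qed.

Lemma psd_deflPA : psd (P *m A).
Proof.
move=> v; rewrite -deflPA_mul_trdeflP -{1}[P]trmxK -qform_mulmx.
exact: spd_psd.
Qed.

Lemma kermx_deflPA : (kermx (P *m A) :=: Z^T)%MS.
Proof.
apply/eqmxP/andP; split; last first.
  apply/sub_kermxP; rewrite deflPA_E mulmxBr (mulmxA _ (A *m Q)) mulmxA.
  by rewrite trZ_mulA_deflQ subrr.
set K := kermx _; have unitA := spd_unitmx spdA.
have KA : K *m A = K *m A *m Q *m A.
  have /eqP := mulmx_ker (P *m A).
  by rewrite -/K deflPA_E mulmxBr subr_eq0 !mulmxA => /eqP.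
have -> : K = K *m A *m Q by apply: (can_inj (mulmxK unitA)).
by rewrite /deflQ !mulmxA submxMl.
Qed.

Lemma rank_deflPA : \rank (P *m A) = (n - r)%N.
Proof.
have rE : r = (n - \rank (P *m A))%N.
  by rewrite -mxrank_ker kermx_deflPA mxrank_tr.
by rewrite [in RHS]rE subKn // rank_leq_row.
Qed.

Lemma deflPA_mul_invmx (b : 'cV[R]_n) : P *m A *m (invmx A *m b) = P *m b.
Proof. by rewrite -mulmxA mulKVmx // spd_unitmx. Qed.

Lemma deflPA_error (b xt : 'cV[R]_n) :
  P *m A *m (invmx A *m b - (P^T *m xt + Q *m b)) = b - A *m (P^T *m xt + Q *m b).
Proof.
have Pb : P *m b = b - A *m Q *m b by rewrite deflPE mulmxBl mul1mx.
rewrite mulmxBr deflPA_mul_invmx Pb !mulmxDr !(mulmxA _ P^T) !(mulmxA _ Q).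
rewrite deflPA_mul_trdeflP deflPA_deflQ mulA_trdeflP mul0mx addr0.
by rewrite opprD addrA addrAC.
Qed.

End Deflation.

Definition selfadj (R : realType) n (H M : 'M[R]_n) : Prop := H *m M = M^T *m H.

Section SelfAdjoint.
Variables (R : realType) (n : nat) (H : 'M[R]_n.+1).
Hypothesis spdH : spd H.

Lemma selfadjB_scalar M x : selfadj H M -> selfadj H (M - x%:M).
Proof.
rewrite /selfadj => saM; rewrite mulmxBr linearB /= mulmxBl saM tr_scalar_mx.
by rewrite mul_mx_scalar mul_scalar_mx.
Qed.

Lemma selfadj_mulmx_sqr_eq0 M (v : 'cV[R]_n.+1) : selfadj H M ->
  M *m (M *m v) = 0 -> M *m v = 0.
Proof.
move=> saM MMv0; apply: (spd_qform_eq0 spdH).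
by rewrite qform_mulmx -saM /qform -!mulmxA MMv0 !mulmx0 mxE.
Qed.

Lemma selfadj_exp_eq0 M k (v : 'cV[R]_n.+1) : selfadj H M ->
  M ^+ k.+1 *m v = 0 -> M *m v = 0.
Proof.
move=> saM; have expSE j : M ^+ j.+1 *m v = M *m (M ^+ j *m v).
  by rewrite exprS -mulmxE mulmxA.
elim: k => [|k IHk]; first by rewrite expr1.
rewrite expSE => Mk2v0; apply: IHk; rewrite expSE.
by apply: selfadj_mulmx_sqr_eq0; rewrite // -expSE.
Qed.

Lemma selfadj_horner_prod_eq0 M (s : seq R) (k : R -> nat) (v : 'cV[R]_n.+1) :
  selfadj H M ->
  horner_mx M (\prod_(x <- s) ('X - x%:P) ^+ (k x).+1) *m v = 0 ->
  horner_mx M (\prod_(x <- s) ('X - x%:P)) *m v = 0.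
Proof.
move=> saM; elim: s v => [|x s IHs] v; first by rewrite !big_nil.
have hornerXsubC : horner_mx M ('X - x%:P) = M - x%:M.
  by rewrite rmorphB /= horner_mx_X horner_mx_C.
have horner_comm p q :
    horner_mx M p *m horner_mx M q = horner_mx M q *m horner_mx M p.
  by rewrite mulmxE -!rmorphM mulrC.
rewrite !big_cons !rmorphM /= -!mulmxE -!mulmxA rmorphXn /= hornerXsubC.
move/(selfadj_exp_eq0 (selfadjB_scalar x saM)) => h.
rewrite -hornerXsubC mulmxA horner_comm -mulmxA in h.
by rewrite -hornerXsubC mulmxA horner_comm -mulmxA IHs.
Qed.

Lemma selfadj_diagonalizable M (s : seq R) : selfadj H M ->
  char_poly M = \prod_(x <- s) ('X - x%:P) -> diagonalizable M.
Proof.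
move=> saM charM; apply/diagonalizableP; exists (undup s); first exact: undup_uniq.
apply: mxminpoly_min; apply/matrixP => i j.
have CH : horner_mx M
    (\prod_(x <- undup s) ('X - x%:P) ^+ (count_mem x s).-1.+1) = 0.
  rewrite -(Cayley_Hamilton M) charM -(prodr_undup_exp_count s xpredT).
  congr horner_mx; apply: eq_big_seq => x; rewrite mem_undup => s_x.
  by rewrite prednK // -has_count has_pred1.
have := selfadj_horner_prod_eq0 (s := undup s) (k := fun x => (count_mem x s).-1)
  (v := delta_mx j 0) saM.
rewrite CH mul0mx -colE => /(_ erefl)/(congr1 (fun w : 'cV_n.+1 => w i 0)).
by rewrite !mxE.
Qed.

End SelfAdjoint.

Lemma commute_diag_mx_eq0 (R : realType) n (G : 'M[R]_n) (d : 'rV[R]_n) i j :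
  G *m diag_mx d = diag_mx d *m G -> d 0 i != d 0 j -> G i j = 0.
Proof.
move=> /matrixP /(_ i j); rewrite mul_mx_diag mul_diag_mx !mxE => Gd dij.
have : G i j * (d 0 j - d 0 i) = 0 by rewrite mulrBr Gd mulrC subrr.
by move/eqP; rewrite mulf_eq0 subr_eq0 [d 0 j == _]eq_sym (negbTE dij) orbF => /eqP.
Qed.

Lemma psd_mulmx_diag (R : realType) n (G : 'M[R]_n) (d f : 'rV[R]_n) :
  spd G -> G *m diag_mx d = diag_mx d *m G ->
  (forall i, 0 <= f 0 i) -> (forall i j, d 0 i = d 0 j -> f 0 i = f 0 j) ->
  psd (G *m diag_mx f).
Proof.
move=> spdG Gd f_ge0 f_d.
pose g := map_mx Num.sqrt f.
have -> : G *m diag_mx f = (diag_mx g)^T *m G *m diag_mx g.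
  apply/matrixP => i j; rewrite tr_diag_mx mul_diag_mx !mul_mx_diag !mxE.
  have [dij|dij] := eqVneq (d 0 i) (d 0 j).
    rewrite (f_d _ _ dij); have := sqr_sqrtr (f_ge0 j).
    by set q := Num.sqrt _ => <-; ring.
  by rewrite (commute_diag_mx_eq0 Gd dij) !(mulr0, mul0r).
by move=> v; rewrite -qform_mulmx; apply: spd_psd.
Qed.

Section DiagonalizedSelfAdjoint.
Variables (R : realType) (n : nat) (H V : 'M[R]_n.+1) (d : 'rV[R]_n.+1).
Hypotheses (spdH : spd H) (unitV : V \in unitmx).
Local Notation M := (invmx V *m diag_mx d *m V).
Hypothesis saM : selfadj H M.

Let G := (invmx V)^T *m H *m invmx V.

Let spdG : spd G.
Proof. by apply: spd_congr; rewrite // mxrank_unit ?unitmx_inv. Qed.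

Let HE : H = V^T *m G *m V.
Proof. by rewrite /G !mulmxA -trmx_mul mulVmx // trmx1 mul1mx mulmxKV. Qed.

Let H_horner_mx p :
  H *m horner_mx M p = V^T *m (G *m diag_mx (map_mx (horner p) d)) *m V.
Proof.
by rewrite horner_mx_uconjC // horner_mx_diag HE !mulmxA mulmxK.
Qed.

Let GD : G *m diag_mx d = diag_mx d *m G.
Proof.
have unitVT : V^T \in unitmx by rewrite unitmx_tr.
have HM : H *m M = V^T *m (G *m diag_mx d) *m V.
  by rewrite HE !mulmxA mulmxK.
have MH : M^T *m H = V^T *m (diag_mx d *m G) *m V.
  by rewrite HE !trmx_mul tr_diag_mx trmx_inv !mulmxA (mulmxKV unitVT).
apply: (can_inj (mulKmx unitVT)); apply: (can_inj (mulmxK unitV)) => /=.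
by rewrite -HM -MH.
Qed.

Lemma selfadj_horner_psd p :
  (forall i, 0 <= p.[d 0 i]) -> psd (H *m horner_mx M p).
Proof.
move=> p_ge0 v; rewrite H_horner_mx -qform_mulmx.
by apply: (psd_mulmx_diag spdG GD) => [i|i j]; rewrite !mxE // => ->.
Qed.

Lemma psd_mulmx_uconj_diag_ge0 : psd (H *m M) -> forall i, 0 <= d 0 i.
Proof.
move=> psdHM i; have := psdHM (invmx V *m delta_mx i 0).
have := H_horner_mx 'X; rewrite horner_mx_X => ->.
rewrite qform_mulmx !mulmxA -trmx_mul mulmxV //.
rewrite trmx1 mul1mx mulmxK // qform_delta mul_mx_diag mxE.
by rewrite [map_mx _ _ _ _]mxE hornerX pmulr_rge0 // spd_diag_gt0.
Qed.

Lemma selfadj_qform_bounds (a b : R) v : 0 <= a ->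
  (forall i, d 0 i = 0 \/ a <= d 0 i <= b) ->
  a * qform (H *m M) v <= qform (H *m M *m M) v <= b * qform (H *m M) v.
Proof.
move=> a_ge0 d_gap; have horner_XM c q :
    horner_mx M ('X * (c%:P + q *: 'X)) = c *: M + q *: (M *m M).
  rewrite rmorphM rmorphD /= linearZ /= horner_mx_X horner_mx_C -mulmxE.
  by rewrite mulmxDr mul_mx_scalar -scalemxAr.
have qform_XM c q : qform (H *m horner_mx M ('X * (c%:P + q *: 'X))) v =
    c * qform (H *m M) v + q * qform (H *m M *m M) v.
  by rewrite horner_XM mulmxDr -!scalemxAr qformD !qformZ (mulmxA H M M).
have psd_lower : psd (H *m horner_mx M ('X * ((- a)%:P + 1 *: 'X))).
  apply: selfadj_horner_psd => i; rewrite !hornerE.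
  by have [->|/andP[]] := d_gap i; [rewrite mul0r | nra].
have psd_upper : psd (H *m horner_mx M ('X * (b%:P + (-1) *: 'X))).
  apply: selfadj_horner_psd => i; rewrite !hornerE.
  by have [->|/andP[]] := d_gap i; [rewrite mul0r | nra].
have := psd_lower v; have := psd_upper v; rewrite !qform_XM.
by move=> upper lower; apply/andP; split; lra.
Qed.

End DiagonalizedSelfAdjoint.

Lemma char_poly_uconjC (R : comUnitRingType) n (V D : 'M[R]_n) :
  V \in unitmx -> char_poly (invmx V *m D *m V) = char_poly D.
Proof.
move=> unitV; rewrite /char_poly /char_poly_mx !map_mxM.
have VinvV : map_mx polyC (invmx V) *m map_mx polyC V = 1%:M.
  by rewrite -map_mxM mulVmx // map_mx1.
have XE : ('X%:M : 'M[{poly R}]_n) =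
    map_mx polyC (invmx V) *m 'X%:M *m map_mx polyC V.
  by rewrite mul_mx_scalar -scalemxAl VinvV scalemx1.
by rewrite {1}XE -mulmxBl -mulmxBr !det_mulmx mulrAC -det_mulmx VinvV det1 mul1r.
Qed.

Lemma char_poly_diag (R : comNzRingType) n (d : 'rV[R]_n) :
  char_poly (diag_mx d) = \prod_(i < n) ('X - (d 0 i)%:P).
Proof.
rewrite char_poly_trig ?diag_mx_is_trig //; apply: eq_bigr => i _.
by rewrite !mxE eqxx mulr1n.
Qed.

Lemma perm_eq_char_poly_uconj_diag (F : fieldType) n (V : 'M[F]_n)
    (d : 'rV[F]_n) (s : seq F) :
  V \in unitmx ->
  char_poly (invmx V *m diag_mx d *m V) = \prod_(x <- s) ('X - x%:P) ->
  perm_eq s [seq d 0 i | i <- enum 'I_n].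
Proof.
move=> unitV; rewrite char_poly_uconjC // char_poly_diag => charE.
by apply: prod_XsubC_eq; rewrite -charE big_map big_enum.
Qed.

Lemma count_map_enum_ord T n (f : 'I_n -> T) (a : pred T) :
  count a [seq f i | i <- enum 'I_n] = (\sum_(i < n) a (f i))%N.
Proof.
rewrite count_map -sum1_count big_mkcond big_enum /=.
by apply: eq_bigr => i _; case: (a (f i)).
Qed.

Lemma rank_diag_mx (F : fieldType) n (d : 'rV[F]_n) :
  \rank (diag_mx d) = (\sum_(i < n) (d 0%R i != 0%R))%N.
Proof.
elim: n d => [|n IHn] d; first by rewrite big_ord0 thinmx0 mxrank0.
have := rank_diag_block_mx (diag_mx (lsubmx (d : 'rV_(1 + n))))
  (diag_mx (rsubmx (d : 'rV_(1 + n)))).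
rewrite -diag_mx_row hsubmxK => ->; rewrite big_ord_recl IHn; congr (_ + _)%N.
  have -> : diag_mx (lsubmx (d : 'rV_(1 + n))) = (d 0 ord0)%:M.
    apply/matrixP => i j; rewrite !ord1 !mxE.
    by congr (d _ _ *+ _); apply: val_inj.
  rewrite rank_rV; congr negb; apply/eqP/eqP => [/matrixP/(_ 0 0)|->].
    by rewrite !mxE.
  by apply/matrixP => i j; rewrite !mxE mul0rn.
by apply: eq_bigr => i _; rewrite mxE; congr (d _ _ != _); apply: val_inj.
Qed.

Lemma sorted_ge0_nth_eq0 (R : numDomainType) (s : seq R) i :
  sorted <=%R s -> all (fun x => 0 <= x) s -> (i < size s)%N ->
  (s`_i == 0) = (i < count_mem 0%R s)%N.
Proof.
elim: s i => [//|y s IHs] i sorted_ys /andP[y_ge0 s_ge0].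
have sorted_s := path_sorted sorted_ys.
have [->|y_neq0] := eqVneq y 0.
  by case: i => [|i] /= i_lt; rewrite eqxx // add1n ltnS IHs.
have s_gt0 z : z \in s -> 0 < z.
  move/(allP (order_path_min le_trans sorted_ys)).
  by apply: lt_le_trans; rewrite lt_def y_neq0.
have -> : count_mem 0 (y :: s) = 0%N.
  rewrite /= (negbTE y_neq0) add0n; apply/count_memPn.
  by apply/negP => /s_gt0; rewrite ltxx.
by case: i => [|i] /= i_lt; rewrite ?(negbTE y_neq0) // gt_eqF ?s_gt0 ?mem_nth.
Qed.

Lemma sorted_ge0_gap (R : numDomainType) (s : seq R) r :
  sorted <=%R s -> all (fun x => 0 <= x) s -> count_mem 0 s = r ->
  (r < size s)%N ->
  0 < s`_r /\ {in s, forall y, y = 0 \/ s`_r <= y <= s`_(size s).-1}.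
Proof.
move=> sorted_s s_ge0 count_s r_lt.
have nth_eq0 i : (i < size s)%N -> (s`_i == 0) = (i < r)%N.
  by rewrite -count_s; apply: sorted_ge0_nth_eq0.
have le_nth := sorted_leq_nth le_trans lexx 0 sorted_s.
split; first by rewrite lt_def nth_eq0 // ltnn (allP s_ge0) ?mem_nth.
move=> _ /(nthP 0)[i i_lt <-]; have [i_lt_r|r_le_i] := ltnP i r.
  by left; apply/eqP; rewrite nth_eq0.
have s_gt0 : (0 < size s)%N := leq_ltn_trans (leq0n i) i_lt.
by right; rewrite !le_nth ?inE ?ltn_predL // -ltnS prednK.
Qed.

Lemma ordered_eigenvalues_uconj_diag_gap (R : realType) n r (V : 'M[R]_n)
    (d : 'rV[R]_n) (s : seq R) :
  V \in unitmx -> ordered_eigenvalues (invmx V *m diag_mx d *m V) s ->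
  (forall i, 0 <= d 0 i) -> \rank (diag_mx d) = (n - r)%N -> (r < n)%N ->
  0 < s`_r /\ forall i, d 0 i = 0 \/ s`_r <= d 0 i <= s`_n.-1.
Proof.
move=> unitV [size_s sorted_s charE] d_ge0 rank_d lt_rn.
have perm_s := perm_eq_char_poly_uconj_diag unitV charE.
have s_ge0 : all (fun x => 0 <= x) s.
  by rewrite (perm_all _ perm_s) all_map; apply/allP => i _; apply: d_ge0.
have count_s : count_mem 0 s = r.
  have := count_predC (pred1 0) [seq d 0 i | i <- enum 'I_n].
  rewrite -(permP perm_s) size_map size_enum_ord.
  rewrite count_map_enum_ord -rank_diag_mx rank_d => count_n.
  by apply/eqP; rewrite -(eqn_add2r (n - r)) count_n subnKC // ltnW.
have r_lt_size : (r < size s)%N by rewrite size_s.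
have [sr_gt0 s_gap] := sorted_ge0_gap sorted_s s_ge0 count_s r_lt_size.
split=> // i; rewrite -[in s`_n.-1]size_s; apply: s_gap.
by rewrite (perm_mem perm_s) map_f ?mem_enum.
Qed.

Lemma sqrt_ratio_le (R : rcfType) (al be ga de a b : R) :
  0 <= al -> 0 <= be -> 0 < de -> 0 < a -> a * al <= ga -> de <= b * be ->
  Num.sqrt al / Num.sqrt be <= Num.sqrt (b / a) * (Num.sqrt ga / Num.sqrt de).
Proof.
move=> al_ge0 be_ge0 de_gt0 a_gt0 lower upper.
have bbe_gt0 : 0 < b * be := lt_le_trans de_gt0 upper.
have be_gt0 : 0 < be.
  rewrite lt_def be_ge0 andbT; apply: contraTneq bbe_gt0 => ->.
  by rewrite mulr0 ltxx.
have b_gt0 : 0 < b by rewrite -(pmulr_lgt0 _ be_gt0).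
have ga_ge0 : 0 <= ga := le_trans (mulr_ge0 (ltW a_gt0) al_ge0) lower.
have de_ge0 := ltW de_gt0; have a_ge0 := ltW a_gt0; have b_ge0 := ltW b_gt0.
rewrite -!sqrtrV // -!sqrtrM ?divr_ge0 // ler_sqrt ?mulr_ge0 ?invr_ge0 ?divr_ge0 //.
rewrite -subr_ge0; have -> : b / a * (ga / de) - al / be =
    (b * be * ga - a * al * de) / (a * be * de).
  by field; rewrite !gt_eqF.
by rewrite divr_ge0 ?mulr_ge0 // subr_ge0; nra.
Qed.

Lemma ordered_eigenvalues_qform_bounds (R : realType) n r (H B : 'M[R]_n.+1)
    (s : seq R) :
  spd H -> B^T = B -> psd B -> \rank B = (n.+1 - r)%N -> (r < n.+1)%N ->
  ordered_eigenvalues (invmx H *m B) s ->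
  0 < s`_r /\ forall v,
    s`_r * qform B v <= qform (B *m invmx H *m B) v <= s`_n * qform B v.
Proof.
move=> spdH BT psdB rankB lt_rn eigs; have unitH := spd_unitmx spdH.
set M := invmx H *m B in eigs; have HM : H *m M = B by rewrite mulKVmx.
have saM : selfadj H M.
  by rewrite /selfadj HM trmx_mul BT trmx_inv (proj1 spdH) mulmxKV.
have [_ _ charM] := eigs.
have [V unitV /(diagonalizable_forLR unitV)[d]] :=
  selfadj_diagonalizable spdH saM charM.
rewrite mxpoly.conjVmx // => ME.
rewrite ME in saM eigs HM.
have d_ge0 : forall i, 0 <= d 0 i.
  by apply: (psd_mulmx_uconj_diag_ge0 spdH unitV); rewrite HM.
have rank_d : \rank (diag_mx d) = (n.+1 - r)%N.
  rewrite -rankB -HM eqmxMfull ?row_full_unit // mxrankMfree ?row_free_unit //.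
  by rewrite eqmxMfull ?row_full_unit ?unitmx_inv.
have [sr_gt0 d_gap] :=
  ordered_eigenvalues_uconj_diag_gap unitV eigs d_ge0 rank_d lt_rn.
split=> // v; have := selfadj_qform_bounds spdH unitV saM v (ltW sr_gt0) d_gap.
by rewrite HM -ME mulmxA.
Qed.

Theorem corollary1 (R : realType) (n r : nat)
  (A H : 'M[R]_n) (Z : 'M[R]_(n, r)) (b xt : 'cV[R]_n) (s : seq R) :
  spd A -> spd H -> (r < n)%N -> \rank Z = r ->
  deflP A Z *m b != 0 ->
  ordered_eigenvalues (invmx H *m (deflP A Z *m A)) s ->
  let P := deflP A Z in
  let x := invmx A *m b in
  let xj := P^T *m xt + Z *m invmx (Z^T *m A *m Z) *m Z^T *m b in
  let rj := b - A *m xj in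
  mxnorm (P *m A) (x - xj) / mxnorm (P *m A) x
    <= Num.sqrt (kappa_eff n r s) *
       (mxnorm (invmx H) rj / mxnorm (invmx H) (P *m b)).
Proof.
case: n A H Z b xt s => [|n] A H Z b xt s; first by move=> _ _; rewrite ltn0.
move=> spdA spdH lt_rn rankZ Pb_neq0 eigs; cbv zeta.
set P := deflP A Z in Pb_neq0 eigs *; set B := P *m A in eigs *.
have BT : B^T = B := deflPA_tr Z spdA.
have [sr_gt0 bounds] := ordered_eigenvalues_qform_bounds spdH BT
  (psd_deflPA spdA rankZ) (rank_deflPA spdA rankZ) lt_rn eigs.
have qform_HiB v : qform (invmx H) (B *m v) = qform (B *m invmx H *m B) v.
  by rewrite qform_mulmx BT.
rewrite /mxnorm -(deflPA_error spdA rankZ b xt) -(deflPA_mul_invmx Z spdA b).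
rewrite /kappa_eff /=.
apply: sqrt_ratio_le => //.
- exact: psd_deflPA.
- exact: psd_deflPA.
- by apply: (proj2 (spd_invmx spdH)); rewrite deflPA_mul_invmx.
- have [lower _] := andP (bounds (invmx A *m b - (P^T *m xt + deflQ A Z *m b))).
  by rewrite -qform_HiB in lower.
- by have [_ upper] := andP (bounds (invmx A *m b)); rewrite -qform_HiB in upper.
Qed.
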